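(* Let $S$ be the group defined in the context, and define the subgroups $$2_A=\langle (v_1v_3)^2,(v_1v_2)^2,s^2,ts\rangle,\qquad 2_C=\langle (v_1v_3)^2,(v_1v_2)^2,s^2,v_1v_3ts\rangle.$$ Both are isomorphic to $(\mathbb{Z}/2)^4$. Then there is an outer (i.e. non-inner) automorphism $\alpha:S\to S$ that exchanges $2_A$ and $2_C$.
   Context: Let $S$ be the group generated by $v_1,v_2,v_3,s,t$, where $v_1,v_2,v_3$ commute, each has order $4$, and together generate $(\mathbb{Z}/4)^3$. The elements $s,t$ generate $D_8=\langle t,s\mid t^2=s^4=(ts)^2=1\rangle$, which acts on $(\mathbb{Z}/4)^3$ by conjugation. Writing $x^y=yxy^{-1}$, the action is $$v_1^t=v_3^{-1},\quad v_2^t=v_2^{-1},\quad v_1^s=v_2,\quad v_2^s=v_3,\quad v_3^s=v_2^{-1}v_1v_3.$$ So $S=(\mathbb{Z}/4)^3\rtimes D_8$. *)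

From mathcomp Require Import all_boot all_algebra all_fingroup all_solvable ring.
Set Implicit Arguments. Unset Strict Implicit. Unset Printing Implicit Defensive.
Import GRing.Theory.
Local Open Scope ring_scope.

(* Concrete model of S = (Z/4)^3 ⋊ D8 as a group of affine permutations of
   the set P = (Z/4)^3.  In MathComp, (p * q) x = q (p x) and x ^ y = y^-1 x y. *)
Definition P : finType := ('Z_4 * 'Z_4 * 'Z_4)%type.

Definition tr1 (x : P) : P := let: (a, b, c) := x in (a + 1, b, c).
Definition tr1i (x : P) : P := let: (a, b, c) := x in (a - 1, b, c).
Definition tr2 (x : P) : P := let: (a, b, c) := x in (a, b + 1, c).
Definition tr2i (x : P) : P := let: (a, b, c) := x in (a, b - 1, c).
Definition tr3 (x : P) : P := let: (a, b, c) := x in (a, b, c + 1).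
Definition tr3i (x : P) : P := let: (a, b, c) := x in (a, b, c - 1).
(* the linear map inverse to the paper's action of s (so that s v s^-1 is as in the paper) *)
Definition sf (x : P) : P := let: (a, b, c) := x in (a + b, c - a, a).
Definition sfi (x : P) : P := let: (a, b, c) := x in (c, a - c, b + c).
Definition tf (x : P) : P := let: (a, b, c) := x in (- c, - b, - a).

Lemma tr1K : cancel tr1 tr1i. Proof. by case=> [[a b] c] /=; rewrite addrK. Qed.
Lemma tr2K : cancel tr2 tr2i. Proof. by case=> [[a b] c] /=; rewrite addrK. Qed.
Lemma tr3K : cancel tr3 tr3i. Proof. by case=> [[a b] c] /=; rewrite addrK. Qed.
Lemma sfK : cancel sf sfi.
Proof. by case=> [[a b] c] /=; rewrite [a + b]addrC addrK subrK. Qed.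
Lemma tfK : cancel tf tf. Proof. by case=> [[a b] c] /=; rewrite !opprK. Qed.

Definition v1 : {perm P} := perm (can_inj tr1K).
Definition v2 : {perm P} := perm (can_inj tr2K).
Definition v3 : {perm P} := perm (can_inj tr3K).
Definition s : {perm P} := perm (can_inj sfK).
Definition t : {perm P} := perm (can_inj tfK).

Definition S : {group {perm P}} := <<[set v1; v2; v3; s; t]>>%G.

Definition twoA : {group {perm P}} :=
  <<[set ((v1 * v3) ^+ 2)%g; ((v1 * v2) ^+ 2)%g; (s ^+ 2)%g; (t * s)%g]>>%G.
Definition twoC : {group {perm P}} :=
  <<[set ((v1 * v3) ^+ 2)%g; ((v1 * v2) ^+ 2)%g; (s ^+ 2)%g; (v1 * v3 * t * s)%g]>>%G.

(* Sanity checks: the generators satisfy the defining relations of the paper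
   (written with MathComp products; e.g. s v1 s^-1 = v2 is s * v1 = v2 * s). *)
Section Sanity.
Local Open Scope group_scope.
Local Ltac pt := apply/permP => -[[a b] c];
  rewrite ?expgS ?expg1 !permM ?perm1 !permE /= ?permM ?permE /=; congr (_,_,_); ring.
Lemma rel_s_v1 : s * v1 = v2 * s. Proof. pt. Qed.
Lemma rel_s_v2 : s * v2 = v3 * s. Proof. pt. Qed.
Lemma rel_s_v3 : v2 * s * v3 = v1 * v3 * s. Proof. pt. Qed. (* v3^s = v2^-1 v1 v3 *)
Lemma rel_t_v1 : v3 * t * v1 = t. Proof. pt. Qed.           (* v1^t = v3^-1 *)
Lemma rel_t_v2 : v2 * t * v2 = t. Proof. pt. Qed.
Lemma rel_t2 : t ^+ 2 = 1. Proof. pt. Qed.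
Lemma rel_s4 : s ^+ 4 = 1. Proof. pt. Qed.
Lemma rel_ts2 : (t * s) ^+ 2 = 1. Proof. pt. Qed.
End Sanity.

From mathcomp Require Import all_boot all_algebra all_fingroup all_solvable.
Set Implicit Arguments.
Unset Strict Implicit.
Unset Printing Implicit Defensive.

(* The translation u = (v1 v3)^-1 of P commutes with v1, v2, v3 and s and is
   inverted by t, so every element of S conjugates u to u or to u^-1.  In any
   group G containing u and normalizing {u, u^-1}, the map x |-> x u^e(x), with
   e(x) = [u^x <> u], is an automorphism, because e is a homomorphism into Z/2
   and u is inverted exactly by the elements with e = 1.  For S it fixes
   v1, v2, v3 and s and sends t to t u; hence it fixes the generators
   (v1 v3)^2, (v1 v2)^2, s^2 common to 2_A and 2_C and sends t s to v1 v3 t s,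
   mapping 2_A onto 2_C and 2_C onto 2_A.  It is not inner: conjugation by y
   agreeing with it would commute with s and send t to t u, so y 0 would be a
   common fixed point of s and t u, and there is none.  Finally 2_A is
   generated by four commuting involutions, so it is elementary abelian of
   order at most 2^4, and sixteen of its elements move (1, 0, 0) to distinct
   points. *)

Local Open Scope group_scope.

Section GroupFacts.
Variable gT : finGroupType.
Implicit Types (u x y : gT) (X : {set gT}).

Lemma conjg_commute u x : commute u x -> u ^ x = u.
Proof. by move=> cux; rewrite conjgE cux mulKg. Qed.

Lemma conjg_inverted u x : u * x * u = x -> u ^ x = u^-1.
Proof. by move=> uxu; rewrite conjgE -{1}uxu invMg mulgKV. Qed.

Lemma norm_pairV u x : u ^ x \in [set u; u^-1] -> x \in 'N([set u; u^-1]).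
Proof.
move=> ux; rewrite inE conjUg !conjg_set1 conjVg; apply/subsetP => y.
move: ux; rewrite !inE => /orP[]/eqP-> /orP[]/eqP->;
  by rewrite ?invgK eqxx ?orbT ?orTb.
Qed.

Lemma gen_abelem_pnElem p n (G : {group gT}) X :
    prime p -> X \subset G -> abelian X -> exponent X %| p ->
    #|X| <= n -> p ^ n <= #|<<X>>| ->
  <<X>>%G \in 'E_p^n(G).
Proof.
move=> p_pr sXG cXX expX leXn le_pn.
have abX : p.-abelem <<X>>.
  by rewrite abelemE // abelian_gen cXX abelian_exponent_gen.
apply/pnElemP; split; rewrite ?gen_subG //.
apply/eqP; rewrite eqn_leq; apply/andP; split.
  rewrite -rank_abelem // -grank_abelian ?(abelem_abelian abX) //.
  exact: leq_trans (grank_min X) leXn.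
rewrite -(leq_exp2l _ _ (prime_gt1 p_pr)).
by rewrite -(card_pgroup (abelem_pgroup abX)).
Qed.

Lemma conjg_perm_fixed (T : finType) (x y : {perm T}) p :
  x p = p -> (x ^ y) (y p) = y p.
Proof. by move=> xp; rewrite conjgE !permM permK xp. Qed.

End GroupFacts.

Section Twist.
Variables (gT : finGroupType) (G : {group gT}) (u : gT).
Hypotheses (Gu : u \in G) (nuG : G \subset 'N([set u; u^-1])).

Definition twist x := x * u ^+ (u ^ x != u).

Lemma conjg_dichotomy x : x \in G -> u ^ x != u -> u ^ x = u^-1.
Proof.
move=> Gx; have : u ^ x \in [set u; u^-1].
  by rewrite memJ_norm ?(subsetP nuG) // !inE eqxx.
by rewrite !inE => /orP[]/eqP-> //; rewrite eqxx.
Qed.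

Lemma twistM : {in G &, {morph twist : x y / x * y}}.
Proof.
move=> x y Gx Gy.
suff twist_exp :
    u ^+ (u ^ (x * y) != u) = (u ^+ (u ^ x != u)) ^ y * u ^+ (u ^ y != u).
  by rewrite /twist twist_exp conjgE !mulgA mulgK.
have uxy : u ^ (x * y) = (u ^ x) ^ y by exact: conjgM.
have [ux|nux] := eqVneq (u ^ x) u; have [uy|nuy] := eqVneq (u ^ y) u;
  rewrite /= ?expg0 ?expg1 ?conj1g ?mulg1 ?mul1g uxy.
- by rewrite ux uy eqxx.
- by rewrite ux nuy.
- have uxV := conjg_dichotomy Gx nux; rewrite uxV in nux.
  by rewrite uxV conjVg uy nux.
- rewrite (conjg_dichotomy Gx nux) conjVg (conjg_dichotomy Gy nuy).
  by rewrite invgK eqxx mulVg.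
Qed.

Lemma twist_centralized x : u ^ x = u -> twist x = x.
Proof. by rewrite /twist => ->; rewrite eqxx mulg1. Qed.

Lemma twist_inverted x : u ^ x = u^-1 -> u^-1 != u -> twist x = x * u.
Proof. by rewrite /twist => -> ->. Qed.

Canonical twist_morphism := Morphism twistM.

Lemma twist_injm : 'injm twist_morphism.
Proof.
apply/subsetP => x kx; move: (mker kx); rewrite /= /twist.
have [ux|nux] := eqVneq (u ^ x) u; first by rewrite mulg1 => ->; rewrite inE.
move/(canRL (mulgK u)); rewrite mul1g => xE.
by move: nux; rewrite xE conjgE invgK mulgV mulg1 eqxx.
Qed.

Lemma twist_im : twist_morphism @* G = G.
Proof.
apply/eqP; rewrite eqEcard card_injm ?twist_injm // leqnn andbT.
by apply/subsetP => _ /morphimP[x _ Gx ->]; rewrite /= /twist groupM ?groupX.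
Qed.

Definition twist_aut := aut twist_injm twist_im.

Lemma twist_autE : {in G, twist_aut =1 twist}.
Proof. exact: autE. Qed.

Lemma twist_aut_image (A : {set gT}) :
  A \subset G -> twist_aut @: A = twist_morphism @* A.
Proof.
move=> sAG; rewrite morphimEsub //; apply: eq_in_imset => x Ax.
exact/twist_autE/(subsetP sAG).
Qed.

End Twist.

(* [ring] does not know that 4 = 0 in 'Z_4, so identities between elements
   of S are checked at all 64 points of P. *)
Ltac eval_at_points :=
  apply/permP; let p := fresh "p" in move=> p;
  rewrite !(permM, permX, permE, perm1) /= ?(permM, permE);
  case: p => -[[[|[|[|[|?]]]] ?] [[|[|[|[|?]]]] ?]] [[|[|[|[|?]]]] ?] //;
  by apply/eqP.

Definition u : {perm P} := (v1 * v3) ^+ 3.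

Lemma S_generators : [/\ v1 \in S, v2 \in S, v3 \in S, s \in S & t \in S].
Proof. by split; apply: mem_gen; rewrite !inE eqxx ?orbT. Qed.

Lemma u_in_S : u \in S.
Proof. by have [v1S _ v3S _ _] := S_generators; rewrite groupX ?groupM. Qed.

Lemma u_conj_generators :
  [/\ u ^ v1 = u, u ^ v2 = u, u ^ v3 = u, u ^ s = u & u ^ t = u^-1].
Proof.
split; try apply: conjg_commute; try apply: conjg_inverted; eval_at_points.
Qed.

Lemma invg_u_neq_u : u^-1 != u.
Proof.
apply/eqP => uVu; have : (u * u) (1, 0, 0)%R = (1, 0, 0)%R.
  by rewrite -{1}uVu mulVg perm1.
by rewrite !(permM, permX, permE) /=.
Qed.

Lemma S_norm_u : S \subset 'N([set u; u^-1]).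
Proof.
have [uv1 uv2 uv3 us ut] := u_conj_generators.
rewrite gen_subG; apply/subsetP => x Xx; apply: norm_pairV; move: Xx.
rewrite !inE => /orP[/orP[/orP[/orP[|]|]|]|] /eqP->;
  by rewrite ?uv1 ?uv2 ?uv3 ?us ?ut eqxx ?orbT.
Qed.

Definition alpha : {perm {perm P}} := twist_aut u_in_S S_norm_u.
Local Notation alpha_morph := (twist_morphism S_norm_u).

Lemma alphaE : {in S, alpha =1 twist u}.
Proof. exact: twist_autE. Qed.

Lemma twist_generators :
  [/\ twist u v1 = v1, twist u v2 = v2, twist u v3 = v3, twist u s = s
    & twist u t = t * u].
Proof.
have [uv1 uv2 uv3 us ut] := u_conj_generators.
by split; try exact: twist_inverted ut invg_u_neq_u; apply: twist_centralized.
Qed.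

Definition twoA_gens : {set {perm P}} :=
  [set (v1 * v3) ^+ 2; (v1 * v2) ^+ 2; s ^+ 2; t * s].
Definition twoC_gens : {set {perm P}} :=
  [set (v1 * v3) ^+ 2; (v1 * v2) ^+ 2; s ^+ 2; v1 * v3 * t * s].

Lemma twoA_gens_sub : twoA_gens \subset S.
Proof.
have [v1S v2S v3S sS tS] := S_generators.
apply/subsetP => x; rewrite !inE => /orP[/orP[/orP[|]|]|] /eqP->;
  by rewrite ?groupX ?groupM.
Qed.

Lemma twoC_gens_sub : twoC_gens \subset S.
Proof.
have [v1S v2S v3S sS tS] := S_generators.
apply/subsetP => x; rewrite !inE => /orP[/orP[/orP[|]|]|] /eqP->;
  by rewrite ?groupX ?groupM.
Qed.

Lemma twoA_gens_abelian : abelian twoA_gens.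
Proof.
apply/centsP => x + y; rewrite !inE.
move=> /orP[/orP[/orP[|]|]|] /eqP-> /orP[/orP[/orP[|]|]|] /eqP->;
  eval_at_points.
Qed.

Lemma twoA_gens_exponent : exponent twoA_gens %| 2.
Proof.
apply/exponentP => x; rewrite !inE.
by move=> /orP[/orP[/orP[|]|]|] /eqP->; eval_at_points.
Qed.

Lemma card_twoA_gens : #|twoA_gens| <= 4.
Proof.
do 3 (apply: leq_trans (leq_card_setU _ _) _;
       rewrite [X in _ + X]cards1 addn1 ltnS).
by rewrite cards1.
Qed.

Lemma twoA_generators :
  [/\ (v1 * v3) ^+ 2 \in twoA, (v1 * v2) ^+ 2 \in twoA, s ^+ 2 \in twoA
    & t * s \in twoA].
Proof. by split; apply: mem_gen; rewrite !inE eqxx ?orbT. Qed.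

Lemma card_twoA_ge : 2 ^ 4 <= #|twoA|.
Proof.
have [aA bA cA dA] := twoA_generators.
set a := (v1 * v3) ^+ 2 in aA *; set b := (v1 * v2) ^+ 2 in bA *.
set c := s ^+ 2 in cA *; set d := t * s in dA *.
have ab_in : {subset [:: 1; a; b; a * b] <= twoA}.
  move=> z; rewrite !inE => /or4P[]/eqP->;
  by [exact: group1 | | | exact: groupM].
have cd_in : {subset [:: 1; c; d; c * d] <= twoA}.
  move=> z; rewrite !inE => /or4P[]/eqP->;
  by [exact: group1 | | | exact: groupM].
pose gs : seq {perm P} :=
  [seq x * y | x <- [:: 1; a; b; a * b], y <- [:: 1; c; d; c * d]].
have gs_uniq : uniq [seq g (1, 0, 0)%R | g : {perm P} <- gs].
  by rewrite /= !(permM, permX, permE, perm1).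
rewrite -[(2 ^ 4)%N]/(size gs) -(card_uniqP (map_uniq gs_uniq)).
apply/subset_leq_card/subsetP => _ /allpairsP[[x y] /= [xab ycd ->]].
exact: groupM (ab_in x xab) (cd_in y ycd).
Qed.

Lemma twoA_pnElem : twoA \in 'E_2^4(S).
Proof.
exact: gen_abelem_pnElem twoA_gens_sub twoA_gens_abelian twoA_gens_exponent
  card_twoA_gens card_twoA_ge.
Qed.

Lemma alpha_morph_twoA : alpha_morph @* twoA = twoC.
Proof.
have [v1S v2S v3S sS tS] := S_generators.
have [tv1 tv2 tv3 ts tt] := twist_generators.
have tsE : t * u * s = v1 * v3 * t * s by eval_at_points.
rewrite morphim_gen ?twoA_gens_sub // morphimEsub ?twoA_gens_sub //.
rewrite !imsetU !imset_set1 !morphX ?groupM // !morphM //=.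
by rewrite tv1 tv2 tv3 ts tt tsE.
Qed.

Lemma twoA_sub : twoA \subset S.
Proof. by rewrite gen_subG twoA_gens_sub. Qed.

Lemma twoC_sub : twoC \subset S.
Proof. by rewrite gen_subG twoC_gens_sub. Qed.

Lemma alpha_morph_twoC : alpha_morph @* twoC = twoA.
Proof.
have [v1S v2S v3S sS tS] := S_generators.
have [tv1 tv2 tv3 ts tt] := twist_generators.
have [aA bA cA dA] := twoA_generators.
have dE : v1 * v3 * (t * u) * s = (v1 * v3) ^+ 2 * (t * s).
  by eval_at_points.
apply/eqP; rewrite eqEcard; apply/andP; split.
  rewrite morphim_gen ?twoC_gens_sub // morphimEsub ?twoC_gens_sub // gen_subG.
  rewrite !imsetU !imset_set1 !morphX ?groupM // !morphM ?groupM //=.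
  by rewrite tv1 tv2 tv3 ts tt dE !subUset !sub1set aA bA cA groupM.
rewrite card_injm ?twist_injm ?twoC_sub // -alpha_morph_twoA.
by rewrite card_injm ?twist_injm ?twoA_sub.
Qed.

Lemma twoC_pnElem : twoC \in 'E_2^4(S).
Proof.
have -> : twoC = (alpha_morph @* twoA)%G.
  by apply: group_inj; rewrite /= alpha_morph_twoA.
rewrite -[in 'E_2^4(S)](twist_im u_in_S S_norm_u).
by rewrite injm_pnElem ?twist_injm ?twoA_sub ?twoA_pnElem.
Qed.

Lemma s_tu_no_common_fixpoint p : s p = p -> (t * u) p = p -> False.
Proof.
rewrite !(permM, permX, permE) /=.
case: p => -[[[|[|[|[|?]]]] ?] [[|[|[|[|?]]]] ?]] [[|[|[|[|?]]]] ?] //;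
  by move=> /eqP + /eqP.
Qed.

Lemma alpha_not_inner :
  ~ exists2 y, y \in S & {in S, forall x, alpha x = x ^ y}.
Proof.
case=> y _ alphaJ; have [_ _ _ sS tS] := S_generators.
have [_ _ _ ts tt] := twist_generators.
have fixes_origin (x : {perm P}) :
  x \in [:: s; t] -> x (0, 0, 0)%R = (0, 0, 0)%R.
  by rewrite !inE => /orP[]/eqP->; rewrite permE; apply/eqP.
have sJ : s ^ y = s by rewrite -alphaJ // alphaE // ts.
have tJ : t ^ y = t * u by rewrite -alphaJ // alphaE // tt.
apply: (@s_tu_no_common_fixpoint (y (0, 0, 0)%R)).
  by rewrite -{1}sJ conjg_perm_fixed // fixes_origin // mem_head.
by rewrite -tJ conjg_perm_fixed // fixes_origin // !inE eqxx orbT.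
Qed.

Theorem lemma2p5 :
  (twoA \in 'E_2^4(S))%g /\ (twoC \in 'E_2^4(S))%g /\
  exists2 alpha : {perm {perm P}}, alpha \in Aut S &
    [/\ ~ (exists2 y, y \in S & {in S, forall x, alpha x = (x ^ y)%g}),
        (alpha @: twoA)%g = twoC
      & (alpha @: twoC)%g = twoA].
Proof.
split; first exact: twoA_pnElem.
split; first exact: twoC_pnElem.
exists alpha; first exact: Aut_aut.
split; first exact: alpha_not_inner.
  by rewrite twist_aut_image ?alpha_morph_twoA ?twoA_sub.
by rewrite twist_aut_image ?alpha_morph_twoC ?twoC_sub.
Qed.
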